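(* Let $T:\mathbf{Set}\to\mathbf{Set}$ be a functor, let $\lambda/n$ and $\lambda'/n'$ be monotone singleton-preserving predicate liftings for $T$, let $S$ be an equivalence relation on a set $X$, let $A_1,\dots,A_n\subseteq X$ each be an $S$-equivalence class or empty, and let $B_1,\dots,B_{n'}\subseteq X$ be $S$-closed (unions of $S$-equivalence classes). Then: (1) $\lambda_X(A_1,\dots,A_n)\subseteq\lambda'_X(B_1,\dots,B_{n'})$ or $\lambda_X(A_1,\dots,A_n)\cap\lambda'_X(B_1,\dots,B_{n'})=\varnothing$. (2) If moreover each $B_j$ is an $S$-equivalence class or empty, then $\lambda_X(A_1,\dots,A_n)=\lambda'_X(B_1,\dots,B_{n'})$ or $\lambda_X(A_1,\dots,A_n)\cap\lambda'_X(B_1,\dots,B_{n'})=\varnothing$.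
   Context: An $n$-ary predicate lifting for $T$ is a family $\lambda_X:(\mathcal{P}X)^n\to\mathcal{P}(TX)$ natural w.r.t. preimages: $\lambda_X(f^{-1}[A_1],\dots,f^{-1}[A_n])=(Tf)^{-1}[\lambda_Y(A_1,\dots,A_n)]$ for every $f:X\to Y$ and $A_i\subseteq Y$. It is monotone if each $\lambda_X$ is monotone w.r.t. inclusion in every argument, and preserves singletons if $|\lambda_X(\{x_1\},\dots,\{x_n\})|=1$ for all sets $X$ and $x_1,\dots,x_n\in X$. *)

From mathcomp Require Import all_boot.
Set Implicit Arguments.
Unset Strict Implicit.
Unset Printing Implicit Defensive.

Definition set_subset {X : Type} (A B : X -> Prop) : Prop := forall x, A x -> B x.
Definition set_eq {X : Type} (A B : X -> Prop) : Prop := forall x, A x <-> B x.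
Definition set_disjoint {X : Type} (A B : X -> Prop) : Prop := forall x, ~ (A x /\ B x).
Definition set_preimage {X Y : Type} (f : X -> Y) (A : Y -> Prop) : X -> Prop :=
  fun x => A (f x).
Definition set_singleton {X : Type} (x : X) : X -> Prop := fun y => y = x.

Definition is_functor (T : Type -> Type)
    (fmap : forall X Y : Type, (X -> Y) -> T X -> T Y) : Prop :=
  (forall (X : Type) (t : T X), fmap X X (fun x => x) t = t) /\
  (forall (X Y Z : Type) (f : X -> Y) (g : Y -> Z) (t : T X),
      fmap X Z (fun x => g (f x)) t = fmap Y Z g (fmap X Y f t)).

Definition predicate_lifting (T : Type -> Type)
    (fmap : forall X Y : Type, (X -> Y) -> T X -> T Y) (n : nat)
    (lam : forall X : Type, ('I_n -> X -> Prop) -> T X -> Prop) : Prop :=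
  forall (X Y : Type) (f : X -> Y) (A : 'I_n -> Y -> Prop),
    set_eq (lam X (fun i => set_preimage f (A i)))
           (set_preimage (fmap X Y f) (lam Y A)).

Definition lifting_monotone (T : Type -> Type) (n : nat)
    (lam : forall X : Type, ('I_n -> X -> Prop) -> T X -> Prop) : Prop :=
  forall (X : Type) (A B : 'I_n -> X -> Prop),
    (forall i, set_subset (A i) (B i)) -> set_subset (lam X A) (lam X B).

Definition preserves_singletons (T : Type -> Type) (n : nat)
    (lam : forall X : Type, ('I_n -> X -> Prop) -> T X -> Prop) : Prop :=
  forall (X : Type) (x : 'I_n -> X),
    exists t : T X, forall u, lam X (fun i => set_singleton (x i)) u <-> u = t.

Definition is_equiv_relation {X : Type} (S : X -> X -> Prop) : Prop :=
  (forall x, S x x) /\ (forall x y, S x y -> S y x) /\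
  (forall x y z, S x y -> S y z -> S x z).

Definition S_equiv_class {X : Type} (S : X -> X -> Prop) (A : X -> Prop) : Prop :=
  exists x, forall y, A y <-> S x y.

Definition is_empty_set {X : Type} (A : X -> Prop) : Prop := forall x, ~ A x.

Definition S_closed {X : Type} (S : X -> X -> Prop) (A : X -> Prop) : Prop :=
  forall x y, S x y -> A x -> A y.

From mathcomp Require Import all_boot.
From Stdlib Require Import Classical FunctionalExtensionality PropExtensionality.

(* Factor through the quotient map [q : X -> X/S], [x |-> S x].  An S-closed
   set is the preimage under [q] of its set of classes, so by naturality
   [lam_X(A) = (T q)^-1 [lam_(X/S)(A/S)]], and likewise for [lam'].  When every
   [A_i] is a class or empty, [A_i/S] lies inside the singleton [{A_i}], so by
   monotonicity and singleton preservation [lam_(X/S)(A/S)] has at most one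
   element.  The preimage of a subsingleton is either contained in or disjoint
   from any other preimage under the same map; if both sets are preimages of
   subsingletons, they are equal or disjoint. *)

Definition subsingleton {Y : Type} (P : Y -> Prop) : Prop :=
  forall u v, P u -> P v -> u = v.

Section Preimages.
Context {Y Z : Type} {g : Y -> Z}.

Lemma preimage_subsingleton_subset_or_disjoint
    {U V : Y -> Prop} {U' V' : Z -> Prop} :
  set_eq U (set_preimage g U') -> set_eq V (set_preimage g V') ->
  subsingleton U' -> set_subset U V \/ set_disjoint U V.
Proof.
move=> defU defV U'1.
case: (classic (exists x, U x /\ V x)) => [[x [Ux Vx]]|noUV].
- left => y Uy; apply/defV; rewrite /set_preimage.
  by rewrite (U'1 (g y) (g x)); [apply/defV | apply/defU | apply/defU].
- by right => y UVy; apply: noUV; exists y.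
Qed.

Lemma preimage_subsingletons_eq_or_disjoint
    {U V : Y -> Prop} {U' V' : Z -> Prop} :
  set_eq U (set_preimage g U') -> set_eq V (set_preimage g V') ->
  subsingleton U' -> subsingleton V' -> set_eq U V \/ set_disjoint U V.
Proof.
move=> defU defV U'1 V'1.
case: (preimage_subsingleton_subset_or_disjoint defV defU V'1) => [VU|VU];
  case: (preimage_subsingleton_subset_or_disjoint defU defV U'1) => [UV|UV].
- by left => x; split; [apply: UV | apply: VU].
- by right.
- by right => x [Ux Vx]; apply: (VU x).
- by right.
Qed.

End Preimages.

Section MonotoneLifting.
Context {T : Type -> Type} {n : nat}
  {lam : forall X : Type, ('I_n -> X -> Prop) -> T X -> Prop}.
Hypothesis lam_mono : lifting_monotone lam.

Lemma lifting_set_eq {X : Type} {A B : 'I_n -> X -> Prop} :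
  (forall i, set_eq (A i) (B i)) -> set_eq (lam X A) (lam X B).
Proof. by move=> AB u; split; apply: lam_mono => i x /AB. Qed.

Lemma lifting_subsingleton {X : Type} {A : 'I_n -> X -> Prop} {a : 'I_n -> X} :
  preserves_singletons lam -> (forall i, set_subset (A i) (set_singleton (a i))) ->
  subsingleton (lam X A).
Proof.
move=> lam1 Aa; have [t lam_a] := lam1 X a.
have lamAt u : lam X A u -> u = t.
  by move=> Au; apply/lam_a; move: Au; apply: lam_mono => i x /Aa.
by move=> u v /lamAt -> /lamAt ->.
Qed.

End MonotoneLifting.

Section Quotient.
Context {X : Type} {S : X -> X -> Prop}.
Hypothesis S_equiv : is_equiv_relation S.

Definition class_image (A : X -> Prop) (P : X -> Prop) : Prop :=
  exists x, A x /\ P = S x.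

Lemma preimage_class_image {A : X -> Prop} :
  S_closed S A -> set_eq (set_preimage S (class_image A)) A.
Proof.
case: S_equiv => refl _ A_closed y; split.
- by case=> x [Ax Sy_Sx]; apply: A_closed Ax; rewrite -Sy_Sx.
- by move=> Ay; exists y.
Qed.

Lemma class_or_empty_closed {A : X -> Prop} :
  S_equiv_class S A \/ is_empty_set A -> S_closed S A.
Proof.
case: S_equiv => _ [_ trans] [[x0 A_x0] | A0] x y Sxy Ax.
- by apply/A_x0; apply: trans Sxy; apply/A_x0.
- by case: (A0 x).
Qed.

Lemma class_image_class_or_empty {A : X -> Prop} :
  S_equiv_class S A \/ is_empty_set A -> set_subset (class_image A) (set_singleton A).
Proof.
case: S_equiv => _ [sym trans] [[x0 A_x0] | A0] P [x [Ax ->]]; last by case: (A0 x).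
have Sx0x := proj1 (A_x0 x) Ax.
apply: functional_extensionality => y; apply: propositional_extensionality.
split=> [Sxy | Ay]; first by apply/A_x0; apply: trans Sx0x Sxy.
by apply: trans (sym _ _ Sx0x) _; apply/A_x0.
Qed.

Lemma lifting_through_quotient {T : Type -> Type}
    {fmap : forall X Y : Type, (X -> Y) -> T X -> T Y} {n : nat}
    {lam : forall X : Type, ('I_n -> X -> Prop) -> T X -> Prop}
    {A : 'I_n -> X -> Prop} :
  predicate_lifting fmap lam -> lifting_monotone lam ->
  (forall i, S_closed S (A i)) ->
  set_eq (lam X A)
         (set_preimage (fmap _ _ S) (lam _ (fun i => class_image (A i)))).
Proof.
move=> lam_nat lam_mono A_closed u; rewrite -lam_nat; move: u.
apply: (lifting_set_eq lam_mono) => i y.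
by rewrite (preimage_class_image (A_closed i) y).
Qed.

End Quotient.

Theorem mainTheorem5
    (T : Type -> Type) (fmap : forall X Y : Type, (X -> Y) -> T X -> T Y)
    (HT : is_functor fmap)
    (n n' : nat)
    (lam : forall X : Type, ('I_n -> X -> Prop) -> T X -> Prop)
    (lam' : forall X : Type, ('I_n' -> X -> Prop) -> T X -> Prop)
    (Hlam : predicate_lifting fmap lam) (Hmon : lifting_monotone lam)
    (Hsing : preserves_singletons lam)
    (Hlam' : predicate_lifting fmap lam') (Hmon' : lifting_monotone lam')
    (Hsing' : preserves_singletons lam')
    (X : Type) (S : X -> X -> Prop) (HS : is_equiv_relation S)
    (A : 'I_n -> X -> Prop) (B : 'I_n' -> X -> Prop)
    (HA : forall i, S_equiv_class S (A i) \/ is_empty_set (A i))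
    (HB : forall j, S_closed S (B j)) :
  (set_subset (lam X A) (lam' X B) \/ set_disjoint (lam X A) (lam' X B)) /\
  ((forall j, S_equiv_class S (B j) \/ is_empty_set (B j)) ->
     set_eq (lam X A) (lam' X B) \/ set_disjoint (lam X A) (lam' X B)).
Proof.
have defA := lifting_through_quotient HS Hlam Hmon
  (fun i => class_or_empty_closed HS (HA i)).
have defB := lifting_through_quotient HS Hlam' Hmon' HB.
have lamA1 := lifting_subsingleton Hmon Hsing
  (fun i => class_image_class_or_empty HS (HA i)).
split; first exact: preimage_subsingleton_subset_or_disjoint defA defB lamA1.
move=> HB1; have lamB1 := lifting_subsingleton Hmon' Hsing'
  (fun j => class_image_class_or_empty HS (HB1 j)).
exact: preimage_subsingletons_eq_or_disjoint defA defB lamA1 lamB1.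
Qed.
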